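(* Let $R$ be an integer with $1\le R\le\frac{\log n}{24\log\log n}$, $L=6R$, $\eta=n^{1/(2L)}$. Let $\mu_1,\ldots,\mu_n$ be i.i.d. with distribution $\pi$, let $\mu_*=\frac12+\sum_{\ell=1}^L\eta^{-\ell}$, and let $\mathcal{E}_0$ be the event that there is a unique $i^*\in[n]$ with $\mu_{i^*}=\mu_*$. Define $H=\sum_{i\in[n],\,i\neq i^*}(\mu_*-\mu_i)^{-2}$ on $\mathcal{E}_0$. Then $\mathbb{E}[H\mid\mathcal{E}_0]\le\eta^{2+2L}L$.
   Context: $\pi$ is the distribution of the random variable $\mu=\frac12+\sum_{\ell=1}^L X_\ell\eta^{-\ell}$, where $X_1,\ldots,X_L$ are independent Bernoulli random variables each with mean $\eta^{-2}$. *)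

From HB Require Import structures.
From mathcomp Require Import all_boot all_order all_algebra.
From mathcomp Require Import reals exp.
Set Implicit Arguments. Unset Strict Implicit. Unset Printing Implicit Defensive.
Import Order.TTheory GRing.Theory Num.Theory.
Local Open Scope ring_scope.

(* Discrete model of n i.i.d. copies of mu = 1/2 + sum_{l=1}^L X_l eta^-l,
   X_l independent Bernoulli(eta^-2).  An outcome records all the bits
   X_{i,l} (i < n, l < L; index l stands for l+1). *)
Definition outcome (n L : nat) := {ffun 'I_n -> {ffun 'I_L -> bool}}.

Section Model.
Variable R : realType.

Definition bern (p : R) (b : bool) : R := if b then p else 1 - p.

Definition weight (n L : nat) (eta : R) (x : outcome n L) : R :=
  \prod_(i < n) \prod_(l < L) bern (eta ^- 2) (x i l).

Definition mu (n L : nat) (eta : R) (x : outcome n L) (i : 'I_n) : R :=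
  2^-1 + \sum_(l < L) (x i l)%:R * eta ^- l.+1.

Definition mustar (L : nat) (eta : R) : R :=
  2^-1 + \sum_(l < L) eta ^- l.+1.

Definition E0 (n L : nat) (eta : R) (x : outcome n L) : bool :=
  #|[set i | mu eta x i == mustar L eta]| == 1%N.

(* the index i* (meaningful on E0) *)
Definition istar (n L : nat) (eta : R) (x : outcome n L) : option 'I_n :=
  [pick i | mu eta x i == mustar L eta].

Definition H (n L : nat) (eta : R) (x : outcome n L) : R :=
  \sum_(i < n | Some i != istar eta x) (mustar L eta - mu eta x i) ^- 2.

Definition condE_H_E0 (n L : nat) (eta : R) : R :=
  (\sum_(x : outcome n L | E0 eta x) weight eta x * H eta x)
  / (\sum_(x : outcome n L | E0 eta x) weight eta x).

End Model.

From HB Require Import structures.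
From mathcomp Require Import all_boot all_order all_algebra.
From mathcomp Require Import reals exp.
From mathcomp Require Import perm.
From mathcomp Require Import ring.
Import Order.TTheory GRing.Theory Num.Theory.
Local Open Scope ring_scope.
Set Implicit Arguments. Unset Strict Implicit. Unset Printing Implicit Defensive.

(* A sample mu equals mu_star exactly when all its bits are 1.  If its first
   zero bit is bit k, which happens with probability p^k (1 - p) for p = eta^-2,
   then mu_star - mu >= eta^-(k+1).  Hence
     E[(mu_star - mu)^-2; mu <> mu_star] <= sum_k p^k (1 - p) eta^(2k+2)
                                          = L eta^2 (1 - p)
                                         <= L eta^2 P(mu <> mu_star).
   Given mu_i <> mu_star, the event E0 only depends on the other samples, so
   the same bound holds conditionally on E0 for each of the n - 1 terms of H,
   and n - 1 <= n = eta^(2L). *)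

Lemma sum_ffun_coord_indep (R : pzSemiRingType) (I J : finType) (i : I) (y0 : J)
    (K : J -> R) (G : {ffun I -> J} -> R) :
  (forall x x' : {ffun I -> J}, (forall j, j != i -> x j = x' j) -> G x = G x') ->
  \sum_(x : {ffun I -> J}) K (x i) * G x
  = (\sum_y K y) * \sum_(x : {ffun I -> J} | x i == y0) G x.
Proof.
move=> G_indep.
rewrite (partition_big (fun x : {ffun I -> J} => x i) xpredT) //= mulr_suml.
apply: eq_bigr => y _.
rewrite (eq_bigr (fun x => K y * G x)); last by move=> x /eqP ->.
rewrite -mulr_sumr; congr (_ * _).
(* swapping the values y0 and y in coordinate i is a bijection between the two slices *)
pose swap (x : {ffun I -> J}) : {ffun I -> J} :=
  [ffun j => if j == i then tperm y0 y (x j) else x j].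
have swapK : involutive swap.
  by move=> x; apply/ffunP => j; rewrite !ffunE; case: eqP => // _; apply: tpermK.
rewrite (reindex_inj (inv_inj swapK)) /=.
apply: eq_big => x.
  by rewrite ffunE eqxx -[X in _ == X](tpermL y0 y) (inj_eq perm_inj).
by move=> _; apply: G_indep => j ji; rewrite ffunE (negbTE ji).
Qed.

Lemma prod_ord_prefix (R : pzSemiRingType) (a b : R) (m k : nat) : (k < m)%N ->
  \prod_(l < m) (if (l < k)%N then a else if l == k :> nat then b else 1) = a ^+ k * b.
Proof.
elim: m => // m IHm; rewrite ltnS leq_eqVlt => /orP[/eqP-> | km]; rewrite big_ord_recr /=.
- rewrite ltnn eqxx (eq_bigr (fun=> a)) ?prodr_const ?card_ord // => l _.
  by rewrite ltn_ord.
- by rewrite IHm // ltnNge ltnW //= gtn_eqF // mulr1.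
Qed.

Section BernoulliRow.
Variables (R : realType) (L : nat) (p : R).
Local Notation row := {ffun 'I_L -> bool}.

Definition row_weight (y : row) : R := \prod_(l < L) bern p (y l).

Definition first_zero (k : 'I_L) (y : row) : bool :=
  ~~ y k && [forall l : 'I_L, (l < k)%N ==> y l].

Lemma row_weight_ge0 (y : row) : 0 <= p -> p <= 1 -> 0 <= row_weight y.
Proof.
by move=> p_ge0 p_le1; apply: prodr_ge0 => l _; case: (y l); rewrite /= ?subr_ge0.
Qed.

Lemma sum_row_weight_first_zero (k : 'I_L) :
  \sum_(y : row) row_weight y * (first_zero k y)%:R = p ^+ k * (1 - p).
Proof.
pose c (l : 'I_L) (b : bool) : R :=
  if (l < k)%N then b%:R else if val l == val k then (~~ b)%:R else 1.
have first_zeroE (y : row) : (first_zero k y)%:R = \prod_l c l (y l).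
  case fz: (first_zero k y).
  - move: fz => /andP[yk /forallP y_lt]; rewrite big1 // => l _; rewrite /c.
    case: ltnP => [lk | kl]; first by have := y_lt l; rewrite lk => /= ->.
    by case: eqP => [/val_inj -> | //]; rewrite (negbTE yk).
  - move/negbT: fz; rewrite negb_and negbK => /orP[yk | /forallPn[l]].
    + by rewrite (bigD1 k) //= /c ltnn eqxx yk mul0r.
    + rewrite negb_imply => /andP[lk yl].
      by rewrite (bigD1 l) //= /c lk (negbTE yl) mul0r.
under eq_bigr do rewrite first_zeroE -big_split /=.
rewrite -(bigA_distr_bigA (fun l b => bern p b * c l b)) /=.
rewrite -(prod_ord_prefix p (1 - p) (ltn_ord k)).
apply: eq_bigr => l _; rewrite big_bool /= /c.
case: ltnP => _; first by rewrite mulr1 mulr0 addr0.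
by case: eqP => _; rewrite ?mulr0 ?mulr1 ?add0r ?addr0 // addrC subrK.
Qed.

End BernoulliRow.

Section SingleSample.
Variables (R : realType) (L : nat) (eta : R).
Hypothesis eta_ge1 : 1 <= eta.
Local Notation row := {ffun 'I_L -> bool}.

Definition mu_row (y : row) : R := 2^-1 + \sum_(l < L) (y l)%:R * eta ^- l.+1.

Definition is_top (y : row) : bool := mu_row y == mustar L eta.

Definition gap (y : row) : R := mustar L eta - mu_row y.

Let eta_gt0 : 0 < eta.
Proof. exact: lt_le_trans ltr01 eta_ge1. Qed.

Lemma gapE (y : row) : gap y = \sum_(l < L) (~~ y l)%:R * eta ^- l.+1.
Proof.
rewrite /gap /mustar /mu_row opprD addrACA subrr add0r -sumrB.
by apply: eq_bigr => l _; case: (y l) => /=; rewrite ?mul1r ?mul0r ?subrr ?subr0.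
Qed.

Lemma gap_ge (y : row) (k : 'I_L) : ~~ y k -> eta ^- k.+1 <= gap y.
Proof.
move=> yk; rewrite gapE (bigD1 k) //= yk mul1r lerDl.
by apply: sumr_ge0 => l _; rewrite mulr_ge0 // invr_ge0 exprn_ge0 // ltW.
Qed.

Lemma row_weight_eta_ge0 (y : row) : 0 <= row_weight (eta ^- 2) y.
Proof.
by rewrite row_weight_ge0 // ?invr_ge0 ?exprn_ge0 ?invf_le1 ?exprn_ege1 ?exprn_gt0 // ltW.
Qed.

Lemma is_topE (y : row) : is_top y = [forall l, y l].
Proof.
apply/idP/forallP => [top l | all1].
  apply/negPn/negP => yl; have := gap_ge yl.
  by rewrite /gap (eqP top) subrr leNgt invr_gt0 exprn_gt0.
rewrite /is_top eq_sym -subr_eq0 -/(gap y) gapE big1 // => l _.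
by rewrite all1 mul0r.
Qed.

Lemma first_zero_nontop (k : 'I_L) (y : row) : first_zero k y -> ~~ is_top y.
Proof. by case/andP=> yk _; rewrite is_topE negb_forall; apply/existsP; exists k. Qed.

Lemma nontop_first_zero (y : row) : ~~ is_top y -> exists k, first_zero k y.
Proof.
rewrite is_topE negb_forall => /existsP[l yl].
case: (@arg_minnP _ l (fun i => ~~ y i) val yl) => k yk k_min; exists k.
rewrite /first_zero yk; apply/forallP => j; apply/implyP => jk.
by apply/negPn/negP => /k_min; rewrite leqNgt jk.
Qed.

Lemma nontop_inv_gap2_le (y : row) :
  (~~ is_top y)%:R * gap y ^- 2 <= \sum_(k < L) (first_zero k y)%:R * eta ^+ (2 * k.+1).
Proof.
have [top | /nontop_first_zero[k fz]] := boolP (is_top y).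
  by rewrite mul0r sumr_ge0 // => k _; rewrite mulr_ge0 // exprn_ge0 // ltW.
rewrite mul1r (bigD1 k) //= fz mul1r -[leLHS]addr0 lerD ?sumr_ge0 //; last first.
  by move=> j _; rewrite mulr_ge0 // exprn_ge0 // ltW.
have etak_gt0 : 0 < eta ^- k.+1 by rewrite invr_gt0 exprn_gt0.
have gap_gt0 : 0 < gap y by apply: lt_le_trans (gap_ge (andP fz).1).
have -> : eta ^+ (2 * k.+1) = (eta ^- k.+1 ^+ 2)^-1 by rewrite exprVn invrK -exprM mulnC.
rewrite lef_pV2 ?posrE ?exprn_gt0 //.
by rewrite ler_pXn2r ?nnegrE ?(ltW etak_gt0) ?(ltW gap_gt0) // gap_ge // (andP fz).1.
Qed.

Lemma sum_nontop_inv_gap2_le :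
  \sum_(y : row) row_weight (eta ^- 2) y * ((~~ is_top y)%:R * gap y ^- 2)
  <= eta ^+ 2 * L%:R * \sum_(y : row) row_weight (eta ^- 2) y * (~~ is_top y)%:R.
Proof.
apply: le_trans (_ : \sum_(y : row) row_weight (eta ^- 2) y *
   \sum_(k < L) (first_zero k y)%:R * eta ^+ (2 * k.+1) <= _).
  apply: ler_sum => y _; apply: ler_wpM2l; first exact: row_weight_eta_ge0.
  exact: nontop_inv_gap2_le.
under eq_bigr do rewrite mulr_sumr.
rewrite exchange_big /= mulrAC mulr_natr -[X in _ *+ X]card_ord -sumr_const.
apply: ler_sum => k _.
under eq_bigr do rewrite mulrA.
rewrite -mulr_suml sum_row_weight_first_zero.
have -> : (eta ^- 2) ^+ k * (1 - eta ^- 2) * eta ^+ (2 * k.+1) = eta ^+ 2 * (1 - eta ^- 2).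
  by rewrite mulnS exprD exprVn -exprM; field; rewrite expf_neq0 // gt_eqF.
apply: ler_wpM2l; first by rewrite exprn_ge0 // ltW.
pose k0 : 'I_L := Ordinal (leq_ltn_trans (leq0n k) (ltn_ord k)).
rewrite -[1 - _]mul1r -(expr0 (eta ^- 2)) -(sum_row_weight_first_zero _ k0).
apply: ler_sum => y _; apply: ler_wpM2l; first exact: row_weight_eta_ge0.
by case fz: (first_zero k0 y); rewrite ?ler0n // (first_zero_nontop fz).
Qed.

End SingleSample.

Section Sample.
Variables (R : realType) (n L : nat) (eta : R).
Hypothesis eta_ge1 : 1 <= eta.
Local Notation row := {ffun 'I_L -> bool}.
Local Notation top := (@is_top R L eta).
Local Notation w := (@row_weight R L (eta ^- 2)).

Lemma mu_eq_mustar (x : outcome n L) j : (mu eta x j == mustar L eta) = top (x j).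
Proof. by []. Qed.

Lemma E0_unique_top (x : outcome n L) :
  E0 eta x -> exists i0, forall j, top (x j) = (j == i0).
Proof.
move=> /cards1P[i0 top_set]; exists i0 => j.
by have := congr1 (fun S : {set 'I_n} => j \in S) top_set; rewrite !inE.
Qed.

Lemma istar_E0 (x : outcome n L) i :
  E0 eta x -> (Some i != istar eta x) = ~~ top (x i).
Proof.
case/E0_unique_top=> i0 top_x; rewrite /istar.
case: pickP => [j | none]; first by rewrite mu_eq_mustar top_x => /eqP->; rewrite top_x.
by move: (none i0); rewrite /= mu_eq_mustar top_x eqxx.
Qed.

Lemma E0_count_nontop (x : outcome n L) :
  E0 eta x -> \sum_(i < n) ((~~ top (x i))%:R : R) = (n - 1)%:R.
Proof.
case/E0_unique_top=> i0 top_x.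
rewrite (bigD1 i0) //= top_x eqxx add0r (eq_bigr (fun=> 1)) => [|i ii0].
  by rewrite sumr_const cardC1 card_ord subn1.
by rewrite top_x (negbTE ii0).
Qed.

Definition others_weight (i : 'I_n) (x : outcome n L) : R :=
  (\prod_(j < n | j != i) w (x j)) * (#|[set j | (j != i) && top (x j)]| == 1%N)%:R.

Lemma others_weight_ge0 i x : 0 <= others_weight i x.
Proof.
by rewrite mulr_ge0 // prodr_ge0 // => j _; apply: row_weight_eta_ge0.
Qed.

Lemma others_weight_indep i (x x' : outcome n L) :
  (forall j, j != i -> x j = x' j) -> others_weight i x = others_weight i x'.
Proof.
move=> xx'; rewrite /others_weight; congr (_ * _).
  by apply: eq_bigr => j ji; rewrite xx'.
congr ((_ == _ : bool)%:R); apply: eq_card => j; rewrite !inE.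
by case: (eqVneq j i) => //= ji; rewrite xx'.
Qed.

Lemma E0_weight_split i (F : row -> R) (x : outcome n L) :
  (forall y, top y -> F y = 0) ->
  (if E0 eta x then weight eta x * F (x i) else 0) = w (x i) * F (x i) * others_weight i x.
Proof.
move=> F_top; have [top_xi | nontop_xi] := boolP (top (x i)).
  by rewrite F_top // !mulr0 mul0r; case: ifP.
have -> : E0 eta x = (#|[set j | (j != i) && top (x j)]| == 1%N).
  rewrite /E0 (_ : [set j | _] = [set j | (j != i) && top (x j)]) //.
  apply/setP => j; rewrite !inE mu_eq_mustar.
  by case: (eqVneq j i) => [->|]; rewrite ?(negbTE nontop_xi).
rewrite /others_weight [weight _ _](bigD1 i) //=.
by case: (_ == 1%N); rewrite /= ?mulr1 ?mulr0 ?mul0r // mulrAC.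
Qed.

Lemma sum_E0_factor i : exists2 c : R, 0 <= c & forall F : row -> R,
  (forall y, top y -> F y = 0) ->
  \sum_(x : outcome n L | E0 eta x) weight eta x * F (x i) = (\sum_(y : row) w y * F y) * c.
Proof.
exists (\sum_(x : outcome n L | x i == [ffun=> true]) others_weight i x).
  by apply: sumr_ge0 => x _; apply: others_weight_ge0.
move=> F F_top; rewrite big_mkcond /=.
under eq_bigr do rewrite E0_weight_split //.
exact: (@sum_ffun_coord_indep R _ _ i [ffun=> true] (fun y => w y * F y) _
          (@others_weight_indep i)).
Qed.

Lemma sum_E0_nontop_inv_gap2_le i :
  \sum_(x : outcome n L | E0 eta x) weight eta x * ((~~ top (x i))%:R * gap eta (x i) ^- 2)
  <= eta ^+ 2 * L%:R * \sum_(x : outcome n L | E0 eta x) weight eta x * (~~ top (x i))%:R.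
Proof.
have [c c_ge0 factor] := sum_E0_factor i.
rewrite (factor (fun y => (~~ top y)%:R * gap eta y ^- 2)) => [|y ->]; last first.
  by rewrite mul0r.
rewrite (factor (fun y => (~~ top y)%:R)) => [|y ->] //.
by rewrite mulrA ler_wpM2r // sum_nontop_inv_gap2_le.
Qed.

Lemma condE_H_E0_le : condE_H_E0 n L eta <= (n - 1)%:R * (eta ^+ 2 * L%:R).
Proof.
rewrite /condE_H_E0; set P := \sum_(x : outcome n L | E0 eta x) weight eta x.
have H_split : \sum_(x : outcome n L | E0 eta x) weight eta x * H eta x =
    \sum_i \sum_(x : outcome n L | E0 eta x)
      weight eta x * ((~~ top (x i))%:R * gap eta (x i) ^- 2).
  rewrite exchange_big /=; apply: eq_bigr => x E0x.
  rewrite /H mulr_sumr big_mkcond /=; apply: eq_bigr => i _.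
  by rewrite istar_E0 //; case: (~~ _); rewrite ?mul1r ?mul0r ?mulr0.
have P_split : (n - 1)%:R * P =
    \sum_i \sum_(x : outcome n L | E0 eta x) weight eta x * (~~ top (x i))%:R.
  rewrite exchange_big mulr_sumr; apply: eq_bigr => x E0x.
  by rewrite -mulr_sumr E0_count_nontop // mulrC.
have [-> | P_neq0] := eqVneq P 0.
  by rewrite invr0 mulr0 !mulr_ge0 ?ler0n ?exprn_ge0 // (le_trans ler01).
have P_gt0 : 0 < P.
  rewrite lt_def P_neq0 sumr_ge0 // => x _.
  by apply: prodr_ge0 => j _; apply: row_weight_eta_ge0.
rewrite ler_pdivrMr // H_split mulrAC mulrC P_split mulr_sumr.
by apply: ler_sum => i _; apply: sum_E0_nontop_inv_gap2_le.
Qed.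

End Sample.

Lemma powR_ge1 (R : realType) (a x : R) : 1 <= a -> 0 <= x -> 1 <= a `^ x.
Proof. by move=> a_ge1 x_ge0; rewrite -(powRr0 a); apply: ler_powR. Qed.

Lemma powR_inv_natK (R : realType) (a : R) (m : nat) :
  (0 < m)%N -> 0 <= a -> (a `^ (1 / m%:R)) ^+ m = a.
Proof.
move=> m_gt0 a_ge0.
by rewrite -powR_mulrn ?powR_ge0 // -powRrM mul1r mulVf ?pnatr_eq0 -?lt0n // powRr1.
Qed.

Unset Implicit Arguments.
Set Strict Implicit.

Theorem lemma5 (R : realType) (n r : nat) :
  (1 <= r)%N ->
  (r%:R : R) <= ln (n%:R : R) / (24 * ln (ln (n%:R : R))) ->
  let L := (6 * r)%N in
  let eta : R := (n%:R : R) `^ (1 / (2 * L)%:R) in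
  condE_H_E0 n L eta <= eta ^+ (2 + 2 * L) * L%:R.
Proof.
(* of the size condition on r only n >= 1 is needed *)
move=> r_ge1 r_le; cbv zeta; set L := (6 * r)%N; set eta := _ `^ _.
have n_ge1 : (1 <= n)%N.
  by case: n {eta} r_le => [|//]; rewrite ln0 // mul0r leNgt ltr0n r_ge1.
have eta_ge1 : 1 <= eta by rewrite powR_ge1 ?ler1n // divr_ge0.
have eta_2L : eta ^+ (2 * L) = n%:R by rewrite powR_inv_natK // muln_gt0 muln_gt0.
apply: le_trans (condE_H_E0_le n L eta_ge1) _.
rewrite exprD eta_2L [leRHS]mulrAC [leRHS]mulrC.
apply: ler_wpM2r; last by rewrite ler_nat leq_subr.
by rewrite mulr_ge0 ?exprn_ge0 // (le_trans ler01).
Qed.
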